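(* Let $w=\{w_j\}_{j\in\mathbb{Z}}$ be a bounded sequence of non-zero elements of $\mathbb{K}\in\{\mathbb{R},\mathbb{C}\}$. If $\liminf_{n\to\infty}\prod_{j=-n+1}^{0}|w_j|=0$, then there exists a sequence $\{p_n\}$ in $\mathbb{N}$ such that $\lim_{n\to\infty}\prod_{j=-p_n+k+1}^{k}|w_j|=0$ for all $k\in\mathbb{Z}$. *)

From HB Require Import structures.
From mathcomp Require Import all_boot all_order all_algebra.
From mathcomp Require Import all_classical all_reals all_analysis.
From mathcomp Require Import complex.
Set Implicit Arguments. Unset Strict Implicit. Unset Printing Implicit Defensive.
Import Order.TTheory GRing.Theory Num.Theory.
Local Open Scope ring_scope.

(* bprod a k p = \prod_{j = k-p+1}^{k} a j  (p factors; = 1 when p = 0). *)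
Definition bprod (R : realType) (a : int -> R) (k : int) (p : nat) : R :=
  \prod_(i < p) a (k - (i : nat)%:Z).

From HB Require Import structures.
From mathcomp Require Import all_boot all_order all_algebra.
From mathcomp Require Import all_classical all_reals all_analysis.
From mathcomp Require Import complex zify.
Import Order.TTheory GRing.Theory Num.Theory.
Import numFieldNormedType.Exports.
Local Open Scope classical_set_scope.
Local Open Scope ring_scope.

(* Write P(k, p) for the product of the p weights ending at index k, and let
   the weights lie in (0, M] with M >= 1.  Choose r_n with
   M^(2n) P(0, r_n) < 1/(n+1), and take p_n = r_n + n.  For n >= |k| the
   window of P(k, p_n), completed by the |k| factors P(0, -k) when k < 0,
   contains the window of P(0, r_n) and at most 2n further factors, each at
   most M; hence P(k, p_n) <= C_k M^(2n) P(0, r_n) < C_k / (n+1). *)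

Lemma limn_einf_lt (R : realType) (u : (\bar R)^nat) (x : \bar R) :
  (limn_einf u < x)%E -> exists n, (u n < x)%E.
Proof.
have einfs0_le : (einfs u 0%N <= ereal_sup (range (einfs u)))%E.
  by apply: ereal_sup_ubound; exists 0%N.
rewrite limn_einf_lim (cvg_lim _ (@cvg_einfs_sup _ u)) //.
by move=> /(le_lt_trans einfs0_le) /ereal_inf_lt [_ [n _ <-]]; exists n.
Qed.

Section bprod_bounds.
Variables (R : realType) (a : int -> R).

Lemma bprodD k p q : bprod a k (p + q) = bprod a k p * bprod a (k - p%:Z) q.
Proof.
rewrite /bprod big_split_ord /=; congr (_ * _); apply: eq_bigr => i _.
by rewrite PoszD opprD addrA.
Qed.

Hypothesis a_gt0 : forall j, 0 < a j.

Lemma bprod_gt0 k p : 0 < bprod a k p.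
Proof. exact: prodr_gt0. Qed.

Variable M : R.
Hypothesis a_leM : forall j, a j <= M.

Lemma bprod_le_expr k p : bprod a k p <= M ^+ p.
Proof.
rewrite -[in M ^+ p](card_ord p) -prodr_const.
by apply: ler_prod => i _; rewrite ltW ?a_leM.
Qed.

Lemma bprod_window_le (m r n : nat) :
  bprod a m (m + r + n) <= M ^+ (m + n) * bprod a 0 r.
Proof.
rewrite -addnA bprodD subrr bprodD mulrA mulrAC exprD.
rewrite ler_pM2r ?bprod_gt0 //.
by apply: ler_pM; rewrite ?bprod_le_expr //; exact/ltW/bprod_gt0.
Qed.

Hypothesis M_ge1 : 1 <= M.

Lemma bprod_shift_le (k : int) : exists2 C : R, 0 < C & forall r n, (`|k| <= n)%N ->
  bprod a k (r + n) <= C * (M ^+ (2 * n) * bprod a 0 r).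
Proof.
have M_expr_le n l : (l <= 2 * n)%N -> M ^+ l <= M ^+ (2 * n).
  exact: ler_weXn2l.
case: k => m.
- exists 1 => // r n mn; rewrite mul1r.
  have -> : (r + n = m + r + (n - m))%N by lia.
  apply: le_trans (bprod_window_le _ _ _) _.
  by rewrite ler_pM2r ?bprod_gt0 ?M_expr_le //; lia.
- have P_gt0 := bprod_gt0 0 m.+1.
  exists (bprod a 0 m.+1)^-1; first by rewrite invr_gt0.
  move=> r n mn.
  have -> : bprod a (Negz m) (r + n) =
            (bprod a 0 m.+1)^-1 * bprod a 0 (0 + r + (m.+1 + n)).
    rewrite (_ : (0 + r + (m.+1 + n) = m.+1 + (r + n))%N); last by lia.
    by rewrite [bprod a 0 (_ + _)]bprodD sub0r NegzE mulKf ?gt_eqF.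
  rewrite ler_pM2l ?invr_gt0 //; apply: le_trans (bprod_window_le _ _ _) _.
  by rewrite ler_pM2r ?bprod_gt0 ?M_expr_le //=; lia.
Qed.

Lemma bprod_shift_cvg0 : (forall e, 0 < e -> exists r, bprod a 0 r < e) ->
  exists p : nat -> nat, forall k : int,
    (fun n => bprod a k (p n)) @ \oo --> 0.
Proof.
move=> small_bprod.
have /choice[r r_small] : forall n : nat, exists r,
    M ^+ (2 * n) * bprod a 0 r < n.+1%:R^-1.
  move=> n; have Mn_gt0 : 0 < M ^+ (2 * n) by rewrite exprn_gt0 // (lt_le_trans ltr01).
  have [r r_small] := small_bprod _ (divr_gt0 (harmonic_gt0 n) Mn_gt0).
  by exists r; rewrite mulrC -ltr_pdivlMr.
exists (fun n => r n + n)%N => k; have [C C_gt0 hC] := bprod_shift_le k.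
apply: (@squeeze_cvgr _ _ _ _ (cst 0) (fun n => C * harmonic n)).
- near=> n; rewrite ltW ?bprod_gt0 //=.
  apply: le_trans (hC _ _ _) _; first by near: n; exact: nbhs_infty_ge.
  by rewrite ler_pM2l // ltW.
- exact: cvg_cst.
- by rewrite -(mulr0 C); apply: cvgM; [exact: cvg_cst | exact: cvg_harmonic].
Unshelve. all: by end_near. Qed.

End bprod_bounds.

Lemma limn_einf_bprod0_shift_cvg0 (R : realType) (a : int -> R) :
  (forall j, 0 < a j) -> (exists M, forall j, a j <= M) ->
  limn_einf (fun n => (bprod a 0 n)%:E) = 0%E ->
  exists p : nat -> nat, forall k : int,
    (fun n => bprod a k (p n)) @ \oo --> 0.
Proof.
move=> a_gt0 [M a_leM] liminf0.
apply: (@bprod_shift_cvg0 _ _ a_gt0 (Num.max M 1)).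
- by move=> j; rewrite le_max a_leM.
- by rewrite le_max lexx orbT.
- move=> e e_gt0; have [r] : exists r, ((bprod a 0 r)%:E < e%:E)%E.
    by apply: limn_einf_lt; rewrite liminf0 lte_fin.
  by rewrite lte_fin; exists r.
Qed.

Theorem corollary3p11 (R : realType) :
  (forall w : int -> R,
     (exists M : R, forall j, `|w j| <= M) ->
     (forall j, w j != 0) ->
     limn_einf (fun n : nat => (bprod (fun j => `|w j|) 0 n)%:E) = 0%E ->
     exists p : nat -> nat, forall k : int,
       (fun n : nat => bprod (fun j => `|w j|) k (p n)) @ \oo --> 0)
  /\
  (forall w : int -> complex.complex R,
     (exists M : R, forall j, complex.Re `|w j| <= M) ->
     (forall j, w j != 0) ->
     limn_einf (fun n : nat => (bprod (fun j => complex.Re `|w j|) 0 n)%:E) = 0%E ->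
     exists p : nat -> nat, forall k : int,
       (fun n : nat => bprod (fun j => complex.Re `|w j|) k (p n)) @ \oo --> 0).
Proof.
split=> w w_bounded w_neq0; apply: limn_einf_bprod0_shift_cvg0 => // j.
- by rewrite normr_gt0.
- by have := normr_gt0 (w j); rewrite w_neq0 ltcE => /andP[].
Qed.
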